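(* Let $G$ be a finite simple graph of order $n\ge 4$ without isolated vertices and with maximum degree $\Delta(G)=n-3$. Fix a vertex $v$ with $\deg(v)=\Delta(G)$. (i) If $G$ is disconnected, then $\gamma_t(G)=4$ and $TDV(v)=n-3$. (ii) If $G$ is connected, then either $\gamma_t(G)=2$ and $TDV(v)\le n-3$, or $\gamma_t(G)=3$ and $TDV(v)\le \left(\frac{n-3}{2}\right)^2+2(n-4)$.
   Context: A set $D \subseteq V(G)$ is a total dominating set of $G$ if every vertex of $G$ has a neighbor in $D$. $\gamma_t(G)$ is the minimum cardinality of a total dominating set; a minimum one is a $\gamma_t(G)$-set. $TDV(v)$ is the number of $\gamma_t(G)$-sets containing $v$. *)

From mathcomp Require Import all_boot.
Set Implicit Arguments. Unset Strict Implicit. Unset Printing Implicit Defensive.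

Definition simple_graph (T : finType) (e : rel T) : Prop :=
  symmetric e /\ irreflexive e.

Definition nbhd (T : finType) (e : rel T) (v : T) : {set T} := [set u | e v u].
Definition deg (T : finType) (e : rel T) (v : T) : nat := #|nbhd e v|.
Definition max_deg (T : finType) (e : rel T) : nat := \max_(u : T) deg e u.
Definition no_isolated (T : finType) (e : rel T) : Prop := forall v : T, 0 < deg e v.
Definition connected_graph (T : finType) (e : rel T) : Prop :=
  forall x y : T, connect e x y.

Definition total_dom (T : finType) (e : rel T) (D : {set T}) : bool :=
  [forall x, exists y, (y \in D) && e x y].

(* total domination number: minimum cardinality of a total dominating set
   (defaults to #|T| if none exists, irrelevant without isolated vertices) *)
Definition gamma_t (T : finType) (e : rel T) : nat :=
  \big[minn/#|T|]_(D : {set T} | total_dom e D) #|D|.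

Definition gamma_t_set (T : finType) (e : rel T) (D : {set T}) : bool :=
  total_dom e D && (#|D| == gamma_t e).

Definition TDV (T : finType) (e : rel T) (v : T) : nat :=
  #|[set D : {set T} | gamma_t_set e D && (v \in D)]|.

From mathcomp Require Import all_boot zify.
Set Implicit Arguments. Unset Strict Implicit. Unset Printing Implicit Defensive.

(* Let k = n - 3 = deg v. Exactly two vertices a, b lie outside the closed
   neighbourhood of v, and every other vertex is dominated by v; so a set
   containing v is totally dominating as soon as it dominates v, a and b.
   If no neighbour of v is adjacent to a or to b, then ab is a component of G:
   every total dominating set contains a, b, a neighbour w of v and a neighbour
   of w, and the minimum ones through v are exactly the sets {v, w, a, b}.
   Otherwise G is connected and {v, w, w'} or {v, w, a} is totally dominating.
   When gamma_t = 3 no neighbour of v is adjacent to both a and b, and a minimum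
   set through v is {v, x, y} with x a neighbour of a in N(v) + b, y a neighbour
   of b in N(v) + a, and (x, y) <> (b, a).  With p + q <= k such common
   neighbours this gives TDV(v) <= (p + 1)(q + 1) - 1 <= k^2/4 + k, and k >= 2
   because a neighbour of v adjacent to a or b has degree at least 2. *)

Section CardBounds.
Variable T : finType.

Lemma leq_card_size (A : {set T}) (s : seq T) : {subset A <= s} -> #|A| <= size s.
Proof. by move=> As; apply: leq_trans (card_size s); apply/subset_leq_card/subsetP. Qed.

Lemma leq_size_card (s : seq T) (A : {set T}) :
  uniq s -> {subset s <= A} -> size s <= #|A|.
Proof. by move=> /card_uniqP <- sA; apply/subset_leq_card/subsetP. Qed.

Lemma leq_card_disjoint (A B C : {set T}) :
  [disjoint A & B] -> A :|: B \subset C -> #|A| + #|B| <= #|C|.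
Proof.
move=> dAB /subset_leq_card; congr (_ <= _).
by apply/eqP; rewrite (leq_card_setU A B).2.
Qed.

End CardBounds.

Lemma succ_mul_succ_bound t x y k : t.+1 <= x.+1 * y.+1 -> x + y <= k -> 2 <= k ->
  4 * t <= k ^ 2 + 8 * (k - 1).
Proof.
move=> ht xy k2; have := (nat_AGM2 x y).1.
have : (x + y) ^ 2 <= k ^ 2 by rewrite leq_exp2r.
nia.
Qed.

Section TotalDomination.
Variables (T : finType) (e : rel T).

Lemma total_domP (D : {set T}) :
  reflect (forall x, exists2 y, y \in D & e x y) (total_dom e D).
Proof.
apply: (iffP forallP) => [dom x | dom x].
  by have /existsP[y /andP[yD xy]] := dom x; exists y.
by have [y yD xy] := dom x; apply/existsP; exists y; rewrite yD.
Qed.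

Lemma gamma_t_leq D : total_dom e D -> gamma_t e <= #|D|.
Proof.
move=> domD; rewrite /gamma_t; elim: (index_enum _) (mem_index_enum D) => // D' r IH.
rewrite inE big_cons => /predU1P[<- | Dr]; first by rewrite domD geq_minl.
by case: ifP => _; rewrite ?geq_min IH ?orbT.
Qed.

Lemma gamma_t_geq m D0 :
  total_dom e D0 -> (forall D, total_dom e D -> m <= #|D|) -> m <= gamma_t e.
Proof.
move=> domD0 lb; apply: (big_ind (fun x => m <= x)) => //.
- exact: leq_trans (lb D0 domD0) (max_card _).
- by move=> x y; rewrite leq_min => -> ->.
Qed.

Lemma total_dom_setT : no_isolated e -> total_dom e setT.
Proof.
move=> iso; apply/total_domP => x.
by have /card_gt0P[y] := iso x; rewrite inE; exists y.
Qed.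

Lemma two_le_deg w x y : e w x -> e w y -> x != y -> 2 <= deg e w.
Proof.
move=> wx wy xy; apply: (@leq_size_card _ [:: x; y]) => [|u]; first by rewrite /= inE xy.
by rewrite !inE => /orP[]/eqP->.
Qed.

Hypothesis irr_e : irreflexive e.

Lemma adj_neq x y : e x y -> x != y.
Proof. by apply: contraTneq => ->; rewrite irr_e. Qed.

Lemma gamma_t_ge2 (x : T) : no_isolated e -> 2 <= gamma_t e.
Proof.
move=> iso; apply: gamma_t_geq (total_dom_setT iso) _ => D /total_domP dom.
have [y yD _] := dom x; have [z zD yz] := dom y.
apply: (@leq_size_card _ [:: y; z]) => [|u]; first by rewrite /= inE adj_neq.
by rewrite !inE => /orP[]/eqP->.
Qed.

Lemma TDV_le_deg v : gamma_t e = 2 -> TDV e v <= deg e v.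
Proof.
move=> g2; apply: leq_trans (leq_imset_card (fun u => [set v; u]) (nbhd e v)).
apply/subset_leq_card/subsetP => D; rewrite !inE /gamma_t_set g2.
case/andP=> /andP[/total_domP dom /eqP cD] vD.
have [u uD vu] := dom v; apply/imsetP; exists u; first by rewrite inE.
apply/eqP; rewrite eq_sym eqEcard cD cards2 adj_neq //= andbT.
by apply/subsetP => x; rewrite !inE => /orP[]/eqP->.
Qed.

End TotalDomination.

Definition nonadj_pair (T : finType) (e : rel T) (v a b : T) : bool :=
  (a != b) && (~: (v |: nbhd e v) == [set a; b]).

Section NonadjacentPair.
Variables (T : finType) (e : rel T) (v : T).
Hypotheses (sym_e : symmetric e) (irr_e : irreflexive e) (noiso_e : no_isolated e).

Lemma nonadj_pair_of_deg : deg e v = #|T| - 3 -> 3 <= #|T| ->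
  exists a b, nonadj_pair e v a b.
Proof.
move=> dv n3; have vNv : v \notin nbhd e v by rewrite inE irr_e.
have : #|~: (v |: nbhd e v)| == 2.
  by rewrite cardsCs setCK cardsU1 vNv; move: dv; rewrite /deg; lia.
by case/cards2P=> a [b [ab Nv]]; exists a, b; rewrite /nonadj_pair ab Nv eqxx.
Qed.

Lemma nonadj_pairC a b : nonadj_pair e v a b -> nonadj_pair e v b a.
Proof. by case/andP=> ab /eqP Nv; rewrite /nonadj_pair eq_sym ab Nv setUC eqxx. Qed.

Lemma nonadj_pair_cases a b : nonadj_pair e v a b ->
  forall x, [\/ x = v, e v x, x = a | x = b].
Proof.
case/andP=> _ /eqP Nv x; have [->|xv] := eqVneq x v; first exact: Or41.
have [vx|vNx] := boolP (e v x); first exact: Or42.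
have : x \in ~: (v |: nbhd e v) by rewrite !inE negb_or xv.
by rewrite Nv !inE => /orP[]/eqP->; [apply: Or43 | apply: Or44].
Qed.

Lemma nonadj_pair_nadj a b : nonadj_pair e v a b -> a != v /\ ~~ e v a.
Proof.
case/andP=> _ /eqP Nv; have : a \in ~: (v |: nbhd e v) by rewrite Nv !inE eqxx.
by rewrite !inE negb_or => /andP[].
Qed.

Lemma total_dom_nonadj_pair a b (D : {set T}) : nonadj_pair e v a b -> v \in D ->
  (exists2 x, x \in D & e v x) -> (exists2 x, x \in D & e a x) ->
  (exists2 x, x \in D & e b x) -> total_dom e D.
Proof.
move=> hp vD domv doma domb; apply/total_domP => x.
by case: (nonadj_pair_cases hp x) => [->|vx|->|->] //; exists v; rewrite // sym_e.
Qed.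

Lemma nbr_nonadj_pair a b x : nonadj_pair e v a b ->
  e a x -> x \in b |: (nbhd e v :&: nbhd e a).
Proof.
move=> hp ax; have [_ vNa] := nonadj_pair_nadj hp; rewrite !inE ax andbT.
case: (nonadj_pair_cases hp x) => [xv|->|xa|->]; rewrite ?eqxx ?orbT //.
- by move: vNa; rewrite sym_e -xv ax.
- by move: ax; rewrite xa irr_e.
Qed.

Lemma adj_nonadj_pair a b : nonadj_pair e v a b ->
  nbhd e v :&: nbhd e a = set0 -> forall y, e a y = (y == b).
Proof.
move=> hp noA; have only_b y : e a y -> y = b.
  by move/(nbr_nonadj_pair hp); rewrite noA setU0 inE => /eqP.
move=> y; apply/idP/eqP => [/only_b // | ->].
by have /card_gt0P[z] := noiso_e a; rewrite inE => az; rewrite -(only_b z az).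
Qed.

Lemma connected_from : (forall x, connect e v x) -> connected_graph e.
Proof.
move=> vx x y; apply: connect_trans (vx y).
by rewrite (sym_connect_sym sym_e).
Qed.

Lemma connect_nonadj_pair a b : nonadj_pair e v a b -> connect e v a -> connect e v b.
Proof.
move=> hp va; have csym := sym_connect_sym sym_e.
have /card_gt0P[y] := noiso_e b; rewrite inE => yb.
rewrite csym; apply: connect_trans (connect1 yb) _.
case: (nonadj_pair_cases hp y) => [->|vy|->|yb'].
- exact: connect0.
- by rewrite csym connect1.
- by rewrite csym.
- by move: yb; rewrite yb' irr_e.
Qed.

Lemma connected_of_common a b : nonadj_pair e v a b ->
  nbhd e v :&: nbhd e a != set0 -> connected_graph e.
Proof.
move=> hp /set0Pn[w]; rewrite !inE => /andP[vw aw].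
have va : connect e v a by apply: connect_trans (connect1 vw) (connect1 _); rewrite sym_e.
apply: connected_from => x.
case: (nonadj_pair_cases hp x) => [->|/connect1 //|-> //|->]; first exact: connect0.
exact: connect_nonadj_pair hp va.
Qed.

Lemma disconnected_of_no_common a b : nonadj_pair e v a b ->
  nbhd e v :&: nbhd e a = set0 -> nbhd e v :&: nbhd e b = set0 -> ~ connected_graph e.
Proof.
move=> hp noA noB conn.
have [av _] := nonadj_pair_nadj hp; have [bv _] := nonadj_pair_nadj (nonadj_pairC hp).
have ab_closed : closed e [set a; b].
  apply: (intro_closed (sym_connect_sym sym_e)) => x y xy.
  rewrite !inE => /orP[]/eqP xe; move: xy; rewrite xe.
    by rewrite (adj_nonadj_pair hp noA) => ->; rewrite orbT.
  by rewrite (adj_nonadj_pair (nonadj_pairC hp) noB) => ->.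
have := closed_connect ab_closed (conn v a).
by rewrite !inE eqxx ![v == _]eq_sym (negbTE av) (negbTE bv).
Qed.

Section Disconnected.
Variables a b : T.
Hypotheses (hp : nonadj_pair e v a b)
  (noA : nbhd e v :&: nbhd e a = set0) (noB : nbhd e v :&: nbhd e b = set0).

Let adj_a : forall y, e a y = (y == b) := adj_nonadj_pair hp noA.
Let adj_b : forall y, e b y = (y == a) := adj_nonadj_pair (nonadj_pairC hp) noB.
Let vNa : ~~ e v a := (nonadj_pair_nadj hp).2.
Let vNb : ~~ e v b := (nonadj_pair_nadj (nonadj_pairC hp)).2.

Lemma nonadj_pair_in_total_dom (D : {set T}) : total_dom e D -> (a \in D) && (b \in D).
Proof.
move=> /total_domP dom; have [x xD] := dom a; have [y yD] := dom b.
by rewrite adj_a adj_b => /eqP yb /eqP xa; rewrite -xa -yb xD yD.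
Qed.

Lemma four_le_total_dom (D : {set T}) : total_dom e D -> 4 <= #|D|.
Proof.
move=> domD; have /andP[aD bD] := nonadj_pair_in_total_dom domD.
move/total_domP: domD => dom; have [w wD vw] := dom v; have [z zD wz] := dom w.
have wNa : ~~ e w a by rewrite sym_e adj_a; apply: contraNneq vNb => <-.
have wNb : ~~ e w b by rewrite sym_e adj_b; apply: contraNneq vNa => <-.
have aw : a != w by apply: contraNneq vNa => ->.
have bw : b != w by apply: contraNneq vNb => ->.
have az : a != z by apply: contraNneq wNa => ->.
have bz : b != z by apply: contraNneq wNb => ->.
apply: (@leq_size_card _ [:: a; b; w; z]) => [|u].
  by rewrite /= !inE !negb_or (andP hp).1 aw az bw bz (adj_neq irr_e wz).
by rewrite !inE => /or4P[]/eqP->.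
Qed.

Lemma total_dom_nonadj_pair_nbr w : e v w -> total_dom e [set v; w; a; b].
Proof.
move=> vw; apply: (total_dom_nonadj_pair hp); rewrite ?inE ?eqxx //.
- by exists w; rewrite ?inE ?eqxx ?orbT.
- by exists b; rewrite ?inE ?eqxx ?orbT // adj_a.
- by exists a; rewrite ?inE ?eqxx ?orbT // adj_b.
Qed.

Lemma card_nonadj_pair_nbr w : e v w -> #|[set v; w; a; b]| = 4.
Proof.
move=> vw; apply/eqP; rewrite eqn_leq four_le_total_dom ?total_dom_nonadj_pair_nbr //.
by rewrite (@leq_card_size _ _ [:: v; w; a; b]) // => u; rewrite !inE -!orbA.
Qed.

Lemma gamma_t_disconnected : gamma_t e = 4.
Proof.
have /card_gt0P[w] := noiso_e v; rewrite inE => vw.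
have domw := total_dom_nonadj_pair_nbr vw.
apply/eqP; rewrite eqn_leq (gamma_t_geq domw four_le_total_dom) andbT.
by rewrite -(card_nonadj_pair_nbr vw) gamma_t_leq.
Qed.

Lemma TDV_disconnected : TDV e v = deg e v.
Proof.
rewrite /TDV; have -> : [set D | gamma_t_set e D & v \in D] =
                        (fun w => [set v; w; a; b]) @: nbhd e v.
  apply/setP => D; rewrite !inE /gamma_t_set gamma_t_disconnected; apply/idP/imsetP.
    case/andP=> /andP[domD /eqP cD] vD.
    have /andP[aD bD] := nonadj_pair_in_total_dom domD.
    have /total_domP/(_ v)[w wD vw] := domD.
    exists w; first by rewrite inE.
    apply/eqP; rewrite eq_sym eqEcard cD card_nonadj_pair_nbr // leqnn andbT.
    by apply/subsetP => u; rewrite !inE -!orbA => /or4P[]/eqP->.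
  case=> w; rewrite inE => vw ->.
  by rewrite total_dom_nonadj_pair_nbr // card_nonadj_pair_nbr // !inE !eqxx.
apply: card_in_imset => w1 w2; rewrite !inE => vw1 _ w12.
have : w1 \in [set v; w2; a; b] by rewrite -w12 !inE eqxx orbT.
rewrite !inE -!orbA => /or4P[]/eqP // w1E; move: vw1; rewrite w1E.
- by rewrite irr_e.
- by rewrite (negbTE vNa).
- by rewrite (negbTE vNb).
Qed.

End Disconnected.

Lemma nonadj_pair_disconnected a b : nonadj_pair e v a b -> ~ connected_graph e ->
  gamma_t e = 4 /\ TDV e v = deg e v.
Proof.
move=> hp disc.
have noA : nbhd e v :&: nbhd e a = set0.
  by apply/eqP/negPn/negP => /(connected_of_common hp).
have noB : nbhd e v :&: nbhd e b = set0.
  by apply/eqP/negPn/negP => /(connected_of_common (nonadj_pairC hp)).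
by rewrite (gamma_t_disconnected hp noA noB) (TDV_disconnected hp noA noB).
Qed.

Lemma connected_common a b : nonadj_pair e v a b -> connected_graph e ->
  (nbhd e v :&: nbhd e a != set0) || (nbhd e v :&: nbhd e b != set0).
Proof.
move=> hp conn; apply/negPn/negP; rewrite negb_or !negbK => /andP[/eqP noA /eqP noB].
exact: disconnected_of_no_common hp noA noB conn.
Qed.

Lemma gamma_t_le3_of_common a b : nonadj_pair e v a b ->
  nbhd e v :&: nbhd e a != set0 -> gamma_t e <= 3.
Proof.
move=> hp /set0Pn[w]; rewrite !inE => /andP[vw aw].
have [noB | /set0Pn[w']] := eqVneq (nbhd e v :&: nbhd e b) set0.
  apply: leq_trans (gamma_t_leq (D := [set v; w; a]) _) _.
    apply: (total_dom_nonadj_pair hp); rewrite ?inE ?eqxx //.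
    - by exists w; rewrite ?inE ?eqxx ?orbT.
    - by exists w; rewrite ?inE ?eqxx ?orbT.
    - by exists a; rewrite ?inE ?eqxx ?orbT // (adj_nonadj_pair (nonadj_pairC hp) noB).
  by apply: (@leq_card_size _ _ [:: v; w; a]) => u; rewrite !inE -!orbA.
rewrite !inE => /andP[vw' bw'].
apply: leq_trans (gamma_t_leq (D := [set v; w; w']) _) _.
  apply: (total_dom_nonadj_pair hp); rewrite ?inE ?eqxx //.
  - by exists w; rewrite ?inE ?eqxx ?orbT.
  - by exists w; rewrite ?inE ?eqxx ?orbT.
  - by exists w'; rewrite ?inE ?eqxx ?orbT.
by apply: (@leq_card_size _ _ [:: v; w; w']) => u; rewrite !inE -!orbA.
Qed.

Lemma gamma_t_le3 a b : nonadj_pair e v a b -> connected_graph e -> gamma_t e <= 3.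
Proof.
move=> hp /(connected_common hp) /orP[] common.
  exact: gamma_t_le3_of_common hp common.
exact: gamma_t_le3_of_common (nonadj_pairC hp) common.
Qed.

Lemma two_le_max_deg a b : nonadj_pair e v a b -> connected_graph e -> 2 <= max_deg e.
Proof.
move=> hp conn; have [av _] := nonadj_pair_nadj hp.
have [bv _] := nonadj_pair_nadj (nonadj_pairC hp).
case/orP: (connected_common hp conn) => /set0Pn[w]; rewrite !inE => /andP[vw xw];
  apply: leq_trans (leq_bigmax w); rewrite ![e _ w]sym_e in vw xw;
  by apply: two_le_deg vw xw _; rewrite eq_sym.
Qed.

Lemma common_nbhd_disjoint a b : nonadj_pair e v a b -> 2 < gamma_t e ->
  [disjoint nbhd e v :&: nbhd e a & nbhd e v :&: nbhd e b].
Proof.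
move=> hp g2; rewrite -setI_eq0; apply/negPn/negP => /set0Pn[w].
rewrite !inE => /andP[/andP[vw aw] /andP[_ bw]].
have : gamma_t e <= 2.
  apply: leq_trans (gamma_t_leq (D := [set v; w]) _) _.
    apply: (total_dom_nonadj_pair hp); rewrite ?inE ?eqxx //.
    - by exists w; rewrite ?inE ?eqxx ?orbT.
    - by exists w; rewrite ?inE ?eqxx ?orbT.
    - by exists w; rewrite ?inE ?eqxx ?orbT.
  by apply: (@leq_card_size _ _ [:: v; w]) => u; rewrite !inE.
by rewrite leqNgt g2.
Qed.

Lemma adj_nonadj_pair_disjoint a b x : nonadj_pair e v a b ->
  [disjoint nbhd e v :&: nbhd e a & nbhd e v :&: nbhd e b] -> e a x -> ~~ e b x.
Proof.
move=> hp dAB /(nbr_nonadj_pair hp); rewrite !inE => /predU1P[->|/andP[vx ax]].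
  by rewrite irr_e.
have xA : x \in nbhd e v :&: nbhd e a by rewrite !inE vx ax.
by have := disjointFr dAB xA; rewrite !inE vx /= => ->.
Qed.

Lemma gamma3_set_shape a b (D : {set T}) : nonadj_pair e v a b -> gamma_t e = 3 ->
  gamma_t_set e D -> v \in D ->
  exists2 p, p \in setX (b |: (nbhd e v :&: nbhd e a))
                        (a |: (nbhd e v :&: nbhd e b)) :\ (b, a)
           & D = [set v; p.1; p.2].
Proof.
move=> hp g3 /andP[/total_domP dom /eqP cD] vD; rewrite g3 in cD.
have [_ vNa] := nonadj_pair_nadj hp; have [_ vNb] := nonadj_pair_nadj (nonadj_pairC hp).
have dAB := common_nbhd_disjoint hp (eq_leq (esym g3)).
have [x xD ax] := dom a; have [y yD by_] := dom b.
have xv : x != v by apply: contraNneq vNa => xv; rewrite sym_e -xv.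
have yv : y != v by apply: contraNneq vNb => yv; rewrite sym_e -yv.
have xy : x != y by apply: contraTneq by_ => <-; apply: adj_nonadj_pair_disjoint hp dAB ax.
have DE : D = [set v; x; y].
  apply/eqP; rewrite eq_sym eqEcard cD; apply/andP; split.
    by apply/subsetP => u; rewrite !inE -!orbA => /or3P[]/eqP->.
  apply: (@leq_size_card _ [:: v; x; y]) => [|u]; last by rewrite !inE -!orbA.
  by rewrite /= !inE !negb_or ![v == _]eq_sym xv yv xy.
exists (x, y) => //.
rewrite in_setD1 in_setX (nbr_nonadj_pair hp ax) (nbr_nonadj_pair (nonadj_pairC hp) by_).
rewrite !andbT; apply/negP => /eqP[xb ya]; have [u] := dom v.
rewrite DE xb ya !inE -!orbA => /or3P[]/eqP->;
  by rewrite ?irr_e ?(negbTE vNa) ?(negbTE vNb).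
Qed.

Lemma TDV_gamma3 a b : nonadj_pair e v a b -> gamma_t e = 3 ->
  (TDV e v).+1 <= #|nbhd e v :&: nbhd e a|.+1 * #|nbhd e v :&: nbhd e b|.+1.
Proof.
move=> hp g3; have [_ vNa] := nonadj_pair_nadj hp.
have [_ vNb] := nonadj_pair_nadj (nonadj_pairC hp).
set P := setX (b |: (nbhd e v :&: nbhd e a)) (a |: (nbhd e v :&: nbhd e b)).
have baP : (b, a) \in P by rewrite in_setX !setU11.
have -> : #|nbhd e v :&: nbhd e a|.+1 * #|nbhd e v :&: nbhd e b|.+1 = #|P|.
  by rewrite cardsX !cardsU1 !inE (negbTE vNa) (negbTE vNb).
rewrite (cardsD1 (b, a) P) baP ltnS.
apply: leq_trans (leq_imset_card (fun p : T * T => [set v; p.1; p.2]) (P :\ (b, a))).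
apply/subset_leq_card/subsetP => D; rewrite inE => /andP[gD vD].
by have [p pP ->] := gamma3_set_shape hp g3 gD vD; apply: imset_f.
Qed.

Lemma nonadj_pair_connected a b : nonadj_pair e v a b -> connected_graph e ->
  deg e v = max_deg e ->
  (gamma_t e = 2 /\ TDV e v <= deg e v) \/
  (gamma_t e = 3 /\ 4 * TDV e v <= deg e v ^ 2 + 8 * (deg e v - 1)).
Proof.
move=> hp conn vmax.
have /andP[] : 2 <= gamma_t e <= 3 by rewrite (gamma_t_ge2 irr_e v) // (gamma_t_le3 hp conn).
rewrite leq_eqVlt => /predU1P[g2 _ | g2 g3]; [left | right].
  by split; [rewrite -g2 | apply: TDV_le_deg].
have {}g3 : gamma_t e = 3 by apply/eqP; rewrite eqn_leq g3.
split=> //; apply: succ_mul_succ_bound (TDV_gamma3 hp g3) _ _.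
  by apply: leq_card_disjoint (common_nbhd_disjoint hp g2) _; rewrite subUset !subsetIl.
by rewrite vmax; apply: two_le_max_deg hp conn.
Qed.

End NonadjacentPair.

Theorem theorem2p17 (T : finType) (e : rel T) (v : T) :
  simple_graph e ->
  4 <= #|T| ->
  no_isolated e ->
  max_deg e = #|T| - 3 ->
  deg e v = max_deg e ->
  (~ connected_graph e -> gamma_t e = 4 /\ TDV e v = #|T| - 3) /\
  (connected_graph e ->
     (gamma_t e = 2 /\ TDV e v <= #|T| - 3) \/
     (gamma_t e = 3 /\ 4 * TDV e v <= (#|T| - 3) ^ 2 + 8 * (#|T| - 4))).
Proof.
move=> [sym_e irr_e] n4 noiso_e maxk vmax.
have dv : deg e v = #|T| - 3 by rewrite vmax.
have [a [b hp]] := nonadj_pair_of_deg irr_e dv (ltnW n4).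
have -> : #|T| - 4 = deg e v - 1 by rewrite dv; lia.
rewrite -dv; split=> [disc | conn].
  exact: nonadj_pair_disconnected hp disc.
exact: nonadj_pair_connected hp conn vmax.
Qed.
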